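(* Let $q'>0$, $e'\in(0,1)$, $q_{\max}>0$, $\mathcal D_5=\{(e,\omega):0\le e\le1,\ 0\le\omega\le\pi\}$, $\mathcal D_6=\{(q,\omega'):0<q\le q_{\max},\ 0\le\omega'\le\pi/2\}$. For each $(q,\omega')\in\mathcal D_6$, $$\min_{(e,\omega)\in\mathcal D_5}\delta_{\rm nod}=\max\{0,\ \ell^{\omega'}_{\rm ext}\},\qquad \max_{(e,\omega)\in\mathcal D_5}\delta_{\rm nod}=\max\{u^{\omega'}_{\rm link},\ u^{\omega'}_{\rm ext}\},$$ where $\ell^{\omega'}_{\rm ext}(q,\omega')=q-\frac{p'}{1-e'\cos\omega'}$, $u^{\omega'}_{\rm link}(q,\omega')=\frac{p'}{1-e'\cos\omega'}-q$, and $$u^{\omega'}_{\rm ext}(q,\omega')=\frac{2q}{1+\cos\omega_*}-\frac{p'}{1+e'\cos\omega'},\qquad \cos\omega_*=\frac{p'e'\cos\omega'}{\sqrt{q^2(1-e'^2\cos^2\omega')^2+(p'e'\cos\omega')^2}+q(1-e'^2\cos^2\omega')}.$$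
   Context: For $q>0$, $e\in[0,1]$ and angles $\omega,\omega'$, define $r_{\pm}=\frac{q(1+e)}{1\pm e\cos\omega}$, $r'_{\pm}=\frac{q'(1+e')}{1\pm e'\cos\omega'}$ (extended-real value $+\infty$ allowed when a denominator vanishes), $d^+=r'_+-r_+$, $d^-=r'_--r_-$, and the nodal distance $\delta_{\rm nod}=\min\{|d^+|,|d^-|\}$. $p'=q'(1+e')$. *)

From Stdlib Require Import Reals.
Open Scope R_scope.

Inductive ER : Type := Fin (x : R) | PInf.

Definition ER_le (a b : ER) : Prop :=
  match a, b with
  | Fin x, Fin y => x <= y
  | _, PInf => True
  | PInf, Fin _ => False
  end.

Definition ER_min (a b : ER) : ER :=
  match a, b with
  | Fin x, Fin y => Fin (Rmin x y)
  | Fin x, PInf => Fin x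
  | PInf, b => b
  end.

Definition rad (q e den : R) : ER :=
  if Req_EM_T den 0 then PInf else Fin (q * (1 + e) / den).

Definition r_plus (q e w : R) : ER := rad q e (1 + e * cos w).
Definition r_minus (q e w : R) : ER := rad q e (1 - e * cos w).

Definition absdiff (a b : ER) : ER :=
  match a, b with
  | Fin x, Fin y => Fin (Rabs (x - y))
  | _, _ => PInf
  end.

Definition delta_nod (q e w q' e' w' : R) : ER :=
  ER_min (absdiff (r_plus q' e' w') (r_plus q e w))
         (absdiff (r_minus q' e' w') (r_minus q e w)).

Definition pp (q' e' : R) : R := q' * (1 + e').

Definition l_ext (q q' e' w' : R) : R := q - pp q' e' / (1 - e' * cos w').
Definition u_link (q q' e' w' : R) : R := pp q' e' / (1 - e' * cos w') - q.

Definition cos_wstar (q q' e' w' : R) : R :=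
  let c := cos w' in
  let A := 1 - e' ^ 2 * c ^ 2 in
  pp q' e' * e' * c /
    (sqrt (q ^ 2 * A ^ 2 + (pp q' e' * e' * c) ^ 2) + q * A).

Definition u_ext (q q' e' w' : R) : R :=
  2 * q / (1 + cos_wstar q q' e' w') - pp q' e' / (1 + e' * cos w').

Definition inD5 (e w : R) : Prop := 0 <= e <= 1 /\ 0 <= w <= PI.

(* Write [A = r'_+ <= B = r'_-] for the fixed nodal radii of the second orbit.
   For any conic with pericentre distance [q], both nodal radii are at least [q] and
   the product of their excesses over [q] is at most [q^2], with equality exactly
   for the parabolas.  Hence the nodal distance is at least [q - B], and it cannot
   exceed the gap of the parabola whose two excesses over [A] and [B] coincide:
   a conic beating that parabola at both nodes would have a larger excess product.
   The balanced parabola is [cos w = cos_wstar], the root in [(-1, 1)] of a quadratic.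
   The extremal values are attained by a circle or an ellipse with apocentre [B]
   (minimum) and by the balanced parabola or the one with a node at infinity
   (maximum). *)
From Stdlib Require Import Reals Lra Psatz.
Open Scope R_scope.

Lemma Ropp_le_Rabs (x : R) : - x <= Rabs x.
Proof. rewrite <- Rabs_Ropp; apply Rle_abs. Qed.

Lemma rad_fin (q e d : R) : d <> 0 -> rad q e d = Fin (q * (1 + e) / d).
Proof. intros Hd; unfold rad; destruct (Req_EM_T d 0); [contradiction | reflexivity]. Qed.

Lemma rad_inf (q e d : R) : d = 0 -> rad q e d = PInf.
Proof. intros Hd; unfold rad; destruct (Req_EM_T d 0); [reflexivity | contradiction]. Qed.

(* [m / (sqrt (a^2 + m^2) + a)] is [(sqrt (a^2 + m^2) - a) / m] rationalized. *)
Lemma rationalized_root (a m : R) : 0 < a ->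
  let c := m / (sqrt (a ^ 2 + m ^ 2) + a) in
  -1 < c < 1 /\ m * c ^ 2 + 2 * a * c - m = 0.
Proof.
  intros Ha c.
  set (S := sqrt (a ^ 2 + m ^ 2)) in c.
  assert (HS2 : S * S = a ^ 2 + m ^ 2) by (apply sqrt_sqrt; nra).
  assert (HS : 0 <= S) by apply sqrt_pos.
  assert (Hm : - S < m < S) by (split; nra).
  assert (Hc : c * (S + a) = m) by (unfold c; field; lra).
  split.
  - split; apply Rmult_lt_reg_r with (S + a); lra.
  - replace (m * c ^ 2 + 2 * a * c - m) with (c * (m * c + a - S)) by (rewrite <- Hc; ring).
    replace (m * c) with (c * (S + a) * c) by (rewrite Hc; ring).
    apply Rmult_eq_reg_r with (S + a); [| lra].
    replace (c * (c * (S + a) * c + a - S) * (S + a))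
      with (c * ((c * (S + a)) ^ 2 + a ^ 2 - S * S)) by ring.
    rewrite Hc, HS2; ring.
Qed.

Lemma parabola_balance (q P k c : R) : -1 < k < 1 -> -1 < c < 1 ->
  P * k * c ^ 2 + 2 * q * (1 - k ^ 2) * c - P * k = 0 ->
  2 * q / (1 + c) - P / (1 + k) = 2 * q / (1 - c) - P / (1 - k).
Proof.
  intros Hk Hc Hroot.
  assert (E : 2 * q / (1 + c) - P / (1 + k) - (2 * q / (1 - c) - P / (1 - k)) =
    -2 * (P * k * c ^ 2 + 2 * q * (1 - k ^ 2) * c - P * k) / ((1 - c ^ 2) * (1 - k ^ 2))).
  { field; repeat split; nra. }
  rewrite Hroot in E; unfold Rdiv in E; rewrite Rmult_0_r, Rmult_0_l in E; lra.
Qed.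

Lemma cos_wstar_balances (q q' e' w' : R) : 0 < q -> 0 <= e' * cos w' < 1 ->
  -1 < cos_wstar q q' e' w' < 1 /\
  2 * q / (1 + cos_wstar q q' e' w') - pp q' e' / (1 + e' * cos w') =
  2 * q / (1 - cos_wstar q q' e' w') - pp q' e' / (1 - e' * cos w').
Proof.
  intros Hq Hk.
  set (k := e' * cos w') in *.
  assert (HK : 0 < q * (1 - k ^ 2)) by (apply Rmult_lt_0_compat; nra).
  destruct (rationalized_root (q * (1 - k ^ 2)) (pp q' e' * k) HK) as [Hc Hroot].
  replace (pp q' e' * k / (sqrt ((q * (1 - k ^ 2)) ^ 2 + (pp q' e' * k) ^ 2) + q * (1 - k ^ 2)))
    with (cos_wstar q q' e' w') in Hc, Hroot
    by (unfold cos_wstar, k; f_equal; [ring | f_equal; [f_equal |]; ring]).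
  split; [exact Hc |].
  apply parabola_balance; [lra | exact Hc | rewrite <- Hroot; ring].
Qed.

Lemma parabola_radii (q c : R) : 0 < q -> -1 < c < 1 ->
  q < 2 * q / (1 + c) /\ q < 2 * q / (1 - c) /\
  (2 * q / (1 + c) - q) * (2 * q / (1 - c) - q) = q ^ 2.
Proof.
  intros Hq Hc.
  assert (E1 : 2 * q / (1 + c) - q = q * (1 - c) / (1 + c)) by (field; lra).
  assert (E2 : 2 * q / (1 - c) - q = q * (1 + c) / (1 - c)) by (field; lra).
  assert (0 < q * (1 - c) / (1 + c)) by (apply Rdiv_lt_0_compat; nra).
  assert (0 < q * (1 + c) / (1 - c)) by (apply Rdiv_lt_0_compat; nra).
  split; [lra | split; [lra |]].
  rewrite E1, E2; field; lra.
Qed.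

(* The radii [r1, r2] at the two nodes of a conic with pericentre distance [q]:
   the excess product equals [q^2] exactly for parabolas, which is also the only
   case where a radius can be infinite (the other one is then [q]). *)
Definition conic_nodal_radii (q : R) (r1 r2 : ER) : Prop :=
  match r1, r2 with
  | Fin R1, Fin R2 => q <= R1 /\ q <= R2 /\ (R1 - q) * (R2 - q) <= q ^ 2
  | PInf, Fin R2 => R2 = q
  | Fin R1, PInf => R1 = q
  | PInf, PInf => False
  end.

Lemma conic_nodal_radii_rad (q e w : R) : 0 < q -> inD5 e w ->
  conic_nodal_radii q (r_plus q e w) (r_minus q e w).
Proof.
  intros Hq [He _].
  pose proof (COS_bound w) as Hb.
  unfold r_plus, r_minus.
  set (x := e * cos w).
  assert (Hx : - e <= x <= e) by (unfold x; split; nra).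
  destruct (Req_EM_T (1 + x) 0) as [Hp | Hp];
    [| destruct (Req_EM_T (1 - x) 0) as [Hm | Hm]].
  - rewrite rad_inf, rad_fin by lra; simpl.
    replace (1 - x) with 2 by lra; replace e with 1 by lra; field.
  - rewrite rad_fin, rad_inf by lra; simpl.
    replace (1 + x) with 2 by lra; replace e with 1 by lra; field.
  - rewrite !rad_fin by lra; simpl.
    assert (Hx1 : 0 < 1 - x * x) by nra.
    assert (E1 : q * (1 + e) / (1 + x) - q = q * (e - x) / (1 + x)) by (field; lra).
    assert (E2 : q * (1 + e) / (1 - x) - q = q * (e + x) / (1 - x)) by (field; lra).
    assert (Eq : q ^ 2 - q * (e - x) / (1 + x) * (q * (e + x) / (1 - x)) =
                 q ^ 2 * ((1 - e) * (1 + e)) / (1 - x * x)) by (field; lra).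
    assert (0 <= q * (e - x) / (1 + x)) by (apply Rmult_le_pos; [nra | left; apply Rinv_0_lt_compat; lra]).
    assert (0 <= q * (e + x) / (1 - x)) by (apply Rmult_le_pos; [nra | left; apply Rinv_0_lt_compat; lra]).
    assert (0 <= q ^ 2 * ((1 - e) * (1 + e)) / (1 - x * x)).
    { apply Rmult_le_pos; [apply Rmult_le_pos; [apply pow2_ge_0 | nra] | left; apply Rinv_0_lt_compat; lra]. }
    rewrite E1, E2; repeat split; lra.
Qed.

Definition nodal_gap (A B : R) (r1 r2 : ER) : ER :=
  ER_min (absdiff (Fin A) r1) (absdiff (Fin B) r2).

Lemma delta_nod_eq (q e w q' e' w' : R) :
  1 + e' * cos w' <> 0 -> 1 - e' * cos w' <> 0 ->
  delta_nod q e w q' e' w' =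
  nodal_gap (pp q' e' / (1 + e' * cos w')) (pp q' e' / (1 - e' * cos w'))
            (r_plus q e w) (r_minus q e w).
Proof.
  intros Hp Hm; unfold delta_nod.
  change (r_plus q' e' w') with (rad q' e' (1 + e' * cos w')).
  change (r_minus q' e' w') with (rad q' e' (1 - e' * cos w')).
  rewrite !rad_fin by assumption; reflexivity.
Qed.

Section NodalGap.

Variables q A B : R.
Hypothesis Hq : 0 < q.
Hypothesis HAB : A <= B.

Lemma nodal_gap_ge (r1 r2 : ER) : conic_nodal_radii q r1 r2 ->
  ER_le (Fin (Rmax 0 (q - B))) (nodal_gap A B r1 r2).
Proof.
  destruct r1 as [R1 |], r2 as [R2 |]; simpl; intros Hr; try contradiction.
  - destruct Hr as [H1 [H2 _]].
    pose proof (Ropp_le_Rabs (A - R1)); pose proof (Ropp_le_Rabs (B - R2)).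
    apply Rmax_lub; apply Rmin_glb; (apply Rabs_pos || lra).
  - pose proof (Ropp_le_Rabs (A - R1)); apply Rmax_lub; [apply Rabs_pos | lra].
  - pose proof (Ropp_le_Rabs (B - R2)); apply Rmax_lub; [apply Rabs_pos | lra].
Qed.

Lemma nodal_gap_min_attained : exists e w, inD5 e w /\
  nodal_gap A B (r_plus q e w) (r_minus q e w) = Fin (Rmax 0 (q - B)).
Proof.
  pose proof PI_RGT_0.
  destruct (Rle_lt_dec B q) as [HBq | HqB].
  - exists 0, 0; split; [unfold inD5; lra |].
    unfold nodal_gap, r_plus, r_minus; rewrite cos_0, !rad_fin by lra; simpl.
    replace (q * (1 + 0) / (1 + 0 * 1)) with q by field.
    replace (q * (1 + 0) / (1 - 0 * 1)) with q by field.
    rewrite Rmax_right, !Rabs_left1, Rmin_right by lra.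
    f_equal; ring.
  - set (e := (B - q) / (B + q)).
    assert (He : 0 <= e < 1).
    { unfold e; split; [apply Rmult_le_pos; [lra | left; apply Rinv_0_lt_compat; lra] |].
      apply Rmult_lt_reg_r with (B + q); [lra |].
      unfold Rdiv; rewrite Rmult_assoc, Rinv_l; lra. }
    exists e, 0; split; [unfold inD5; lra |].
    unfold nodal_gap, r_plus, r_minus; rewrite cos_0, !rad_fin by lra; simpl.
    replace (q * (1 + e) / (1 - e * 1)) with B by (unfold e; field; lra).
    rewrite Rmax_left, Rminus_diag, Rabs_R0, Rmin_right by (try apply Rabs_pos; lra).
    reflexivity.
Qed.

Variable c : R.
Hypothesis Hc : -1 < c < 1.
Hypothesis Hbal : 2 * q / (1 + c) - A = 2 * q / (1 - c) - B.

(* If a conic's radii exceeded both [A] and [B] by more than the balanced parabola's,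
   both excesses over [q] would beat the parabola's, whose product is already [q^2]. *)
Lemma nodal_gap_fin_le (R1 R2 : R) :
  q <= R1 -> q <= R2 -> (R1 - q) * (R2 - q) <= q ^ 2 ->
  Rmin (Rabs (A - R1)) (Rabs (B - R2)) <= Rmax (B - q) (2 * q / (1 + c) - A).
Proof.
  intros H1 H2 Hprod.
  destruct (parabola_radii q c Hq Hc) as [Hs1 [Hs2 Hs]].
  set (R1s := 2 * q / (1 + c)) in *; set (R2s := 2 * q / (1 - c)) in *.
  destruct (Rle_lt_dec R1 A) as [HA | HA].
  { apply Rle_trans with (Rabs (A - R1)); [apply Rmin_l |].
    apply Rle_trans with (B - q); [rewrite Rabs_pos_eq; lra | apply Rmax_l]. }
  destruct (Rle_lt_dec R2 B) as [HB | HB].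
  { apply Rle_trans with (Rabs (B - R2)); [apply Rmin_r |].
    apply Rle_trans with (B - q); [rewrite Rabs_pos_eq; lra | apply Rmax_l]. }
  rewrite (Rabs_left (A - R1)), (Rabs_left (B - R2)) by lra.
  apply Rle_trans with (R1s - A); [| apply Rmax_r].
  destruct (Rle_lt_dec (Rmin (- (A - R1)) (- (B - R2))) (R1s - A)) as [Hle | Hlt]; [exact Hle |].
  exfalso.
  pose proof (Rmin_l (- (A - R1)) (- (B - R2))); pose proof (Rmin_r (- (A - R1)) (- (B - R2))).
  assert ((R1s - q) * (R2s - q) < (R1 - q) * (R2 - q)) by nra.
  lra.
Qed.

Lemma nodal_gap_le (r1 r2 : ER) : conic_nodal_radii q r1 r2 ->
  ER_le (nodal_gap A B r1 r2) (Fin (Rmax (B - q) (2 * q / (1 + c) - A))).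
Proof.
  destruct (parabola_radii q c Hq Hc) as [Hs1 _].
  destruct r1 as [R1 |], r2 as [R2 |]; simpl; intros Hr; try contradiction.
  - destruct Hr as [H1 [H2 H]]; exact (nodal_gap_fin_le R1 R2 H1 H2 H).
  - subst R1; destruct (Rle_lt_dec q A).
    + rewrite Rabs_pos_eq by lra; apply Rle_trans with (B - q); [lra | apply Rmax_l].
    + rewrite Rabs_left by lra; apply Rle_trans with (2 * q / (1 + c) - A); [lra | apply Rmax_r].
  - subst R2; destruct (Rle_lt_dec q B).
    + rewrite Rabs_pos_eq by lra; apply Rmax_l.
    + rewrite Rabs_left by lra; apply Rle_trans with (2 * q / (1 + c) - A); [lra | apply Rmax_r].
Qed.

Lemma nodal_gap_max_attained : exists e w, inD5 e w /\
  nodal_gap A B (r_plus q e w) (r_minus q e w) =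
  Fin (Rmax (B - q) (2 * q / (1 + c) - A)).
Proof.
  destruct (parabola_radii q c Hq Hc) as [Hs1 [Hs2 _]].
  pose proof PI_RGT_0.
  destruct (Rle_lt_dec (2 * q / (1 + c) - A) (B - q)) as [Hle | Hlt].
  - exists 1, PI; split; [unfold inD5; lra |].
    unfold nodal_gap, r_plus, r_minus; rewrite cos_PI, rad_inf, rad_fin by lra; simpl.
    replace (q * (1 + 1) / (1 - 1 * -1)) with q by field.
    rewrite Rmax_left, Rabs_pos_eq by lra; reflexivity.
  - exists 1, (acos c); split; [unfold inD5; split; [lra | apply acos_bound] |].
    unfold nodal_gap, r_plus, r_minus; rewrite cos_acos, !rad_fin by lra; simpl.
    replace (q * (1 + 1) / (1 + 1 * c)) with (2 * q / (1 + c)) by (field; lra).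
    replace (q * (1 + 1) / (1 - 1 * c)) with (2 * q / (1 - c)) by (field; lra).
    rewrite Rmax_right, !Rabs_left1, Rmin_left by lra.
    f_equal; ring.
Qed.

End NodalGap.

Theorem proposition5 (q' e' qmax q w' : R) :
  0 < q' -> 0 < e' < 1 -> 0 < qmax ->
  0 < q <= qmax -> 0 <= w' <= PI / 2 ->
  (* minimum over D5 *)
  ((exists e w, inD5 e w /\
      delta_nod q e w q' e' w' = Fin (Rmax 0 (l_ext q q' e' w'))) /\
   (forall e w, inD5 e w ->
      ER_le (Fin (Rmax 0 (l_ext q q' e' w'))) (delta_nod q e w q' e' w'))) /\
  (* maximum over D5 *)
  ((exists e w, inD5 e w /\
      delta_nod q e w q' e' w' =
        Fin (Rmax (u_link q q' e' w') (u_ext q q' e' w'))) /\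
   (forall e w, inD5 e w ->
      ER_le (delta_nod q e w q' e' w')
            (Fin (Rmax (u_link q q' e' w') (u_ext q q' e' w'))))).
Proof.
  intros Hq' He' _ [Hq _] Hw'.
  assert (Hcos : 0 <= cos w' <= 1) by (split; [apply cos_ge_0 | apply COS_bound]; lra).
  assert (Hk : 0 <= e' * cos w' < 1) by (split; nra).
  assert (HAB : pp q' e' / (1 + e' * cos w') <= pp q' e' / (1 - e' * cos w')).
  { apply Rmult_le_compat_l; [unfold pp; nra | apply Rinv_le_contravar; lra]. }
  destruct (cos_wstar_balances q q' e' w' Hq Hk) as [Hc Hbal].
  assert (Hdelta : forall e w, delta_nod q e w q' e' w' =
    nodal_gap (pp q' e' / (1 + e' * cos w')) (pp q' e' / (1 - e' * cos w'))
              (r_plus q e w) (r_minus q e w)) by (intros; apply delta_nod_eq; lra).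
  unfold l_ext, u_link, u_ext; split; split.
  - destruct (nodal_gap_min_attained q _ _ Hq HAB) as (e & w & HD & E).
    exists e, w; rewrite Hdelta; auto.
  - intros e w HD; rewrite Hdelta; apply nodal_gap_ge, conic_nodal_radii_rad; assumption.
  - destruct (nodal_gap_max_attained q _ _ Hq HAB _ Hc Hbal) as (e & w & HD & E).
    exists e, w; rewrite Hdelta; auto.
  - intros e w HD; rewrite Hdelta; apply nodal_gap_le, conic_nodal_radii_rad; assumption.
Qed.
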